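(* Let $\sigma:\mathbb{R}\to\mathbb{R}$ be continuous and let $F:\mathbb{R}^d\to\mathbb{R}^d$ be given by $F=A_L\circ\dots\circ A_1$ with $A_j(x)=\sigma(W_jx+b_j)$, $W_j\in\mathbb{R}^{d\times d}$, $b_j\in\mathbb{R}^d$, $j=1,\dots,L$. Then for every compact $K\subset\mathbb{R}^d$ and every $\varepsilon>0$ there exist invertible $\tilde W_j\in\mathbb{R}^{d\times d}$, $j=1,\dots,L$, such that the function $\tilde F=\tilde A_L\circ\dots\circ\tilde A_1$ with $\tilde A_j(x)=\sigma(\tilde W_jx+b_j)$ satisfies $\|\tilde F-F\|_K<\varepsilon$.
   Context: $\sigma$ is applied componentwise to vectors. For $f:K\to\mathbb{R}^m$, $\|f\|_K=\sup\{\|f(x)\|:x\in K\}$ with $\|\cdot\|$ the Euclidean norm. *)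

From HB Require Import structures.
From mathcomp Require Import all_boot all_order all_algebra.
From mathcomp Require Import all_classical all_reals all_analysis.
Set Implicit Arguments. Unset Strict Implicit. Unset Printing Implicit Defensive.
Import Order.TTheory GRing.Theory Num.Theory.
Local Open Scope ring_scope.

Definition sigmav (R : realType) (d : nat) (sigma : R -> R) (v : 'cV[R]_d)
  : 'cV[R]_d := map_mx sigma v.

Definition enorm (R : realType) (d : nat) (v : 'cV[R]_d) : R :=
  Num.sqrt (\sum_(i < d) v i 0 ^+ 2).

Definition layer (R : realType) (d : nat) (sigma : R -> R)
  (W : 'M[R]_d) (b : 'cV[R]_d) (x : 'cV[R]_d) : 'cV[R]_d :=
  sigmav sigma (W *m x + b).

(* F = A_L o ... o A_1, layers indexed by 'I_L (index j stands for layer j+1). *)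
Definition network (R : realType) (d L : nat) (sigma : R -> R)
  (W : 'I_L -> 'M[R]_d) (b : 'I_L -> 'cV[R]_d) (x : 'cV[R]_d) : 'cV[R]_d :=
  foldl (fun y (j : 'I_L) => layer sigma (W j) (b j) y) x (enum 'I_L).

From HB Require Import structures.
From mathcomp Require Import all_boot all_order all_algebra.
From mathcomp Require Import all_classical all_reals all_analysis.
Import Order.TTheory GRing.Theory Num.Theory.
Import numFieldNormedType.Exports.
Local Open Scope ring_scope.
Local Open Scope classical_set_scope.

(* Perturb every weight matrix to W_j + t I. Since det (W_j + t I) is the
   characteristic polynomial of -W_j evaluated at t, it is a nonzero polynomial
   and W_j + t I is invertible for all small t <> 0. The network output depends
   jointly continuously on the input x and on t, so by compactness of K it is
   uniformly eps/2-close on K to the unperturbed output for all small t. *)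

Section matrix_continuity.
Context {R : realType} {T : topologicalType}.

Lemma cvg_mx_entrywise (U : Type) (F : set_system U) (FF : Filter F) m n
    (f : U -> 'M[R]_(m, n)) (M : 'M[R]_(m, n)) :
  (forall i j, (fun p => f p i j) @ F --> M i j) -> f @ F --> M.
Proof.
move=> fM A [P PM sPA] /=.
apply: (@filterS _ _ _ [set p | forall i j, P i j (f p i j)]).
  by move=> p Pp; apply: sPA.
by apply: filter_forall => i; apply: filter_forall => j; exact: fM.
Qed.

Lemma continuous_mx_entry m n (f : T -> 'M[R]_(m, n)) i j :
  continuous f -> continuous (fun p => f p i j).
Proof.
by move=> cf p; exact: continuous_comp (cf p) (@coord_continuous R m n i j _).
Qed.

Lemma continuous_mulmx m n k (f : T -> 'M[R]_(m, n)) (g : T -> 'M[R]_(n, k)) :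
  continuous f -> continuous g -> continuous (fun p => f p *m g p).
Proof.
move=> cf cg p; apply: cvg_mx_entrywise => i j.
under eq_cvg do rewrite mxE; rewrite mxE.
apply: continuous_big p => [|l _]; first exact: add_continuous.
by move=> q; apply: cvgM; apply: continuous_mx_entry.
Qed.

Lemma continuous_map_mx m n (s : R -> R) (f : T -> 'M[R]_(m, n)) :
  continuous s -> continuous f -> continuous (fun p => map_mx s (f p)).
Proof.
move=> cs cf p; apply: cvg_mx_entrywise => i j.
under eq_cvg do rewrite mxE; rewrite mxE.
by apply: continuous_comp; [exact: continuous_mx_entry | exact: cs].
Qed.

Lemma continuous_scalar_mx n : continuous (@scalar_mx R n).
Proof.
move=> t; apply: cvg_mx_entrywise => i j.
under eq_cvg do rewrite mxE; rewrite mxE.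
exact: cvgMn cvg_id.
Qed.

End matrix_continuity.

Section network_continuity.
Context {R : realType} {T : topologicalType} {d : nat} {sigma : R -> R}.
Hypothesis sigma_cont : continuous sigma.

Lemma continuous_layer (Wp : T -> 'M[R]_d) (b : 'cV[R]_d) (g : T -> 'cV[R]_d) :
  continuous Wp -> continuous g ->
  continuous (fun p => layer sigma (Wp p) b (g p)).
Proof.
move=> cW cg; apply: continuous_map_mx => // p.
by apply: cvgD; [exact: continuous_mulmx | exact: cvg_cst].
Qed.

Lemma continuous_network L (Wp : T -> 'I_L -> 'M[R]_d) (b : 'I_L -> 'cV[R]_d)
    (g : T -> 'cV[R]_d) :
  (forall j, continuous (Wp^~ j)) -> continuous g ->
  continuous (fun p => network sigma (Wp p) b (g p)).
Proof.
rewrite /network => cW; elim: (enum 'I_L) g => [|j s IHs] g cg //=.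
by apply: IHs; exact: continuous_layer.
Qed.

End network_continuity.

Lemma continuous_network_shift (R : realType) (d L : nat) (sigma : R -> R)
    (sigma_cont : continuous sigma) (W : 'I_L -> 'M[R]_d) (b : 'I_L -> 'cV[R]_d) :
  continuous (fun p : 'cV[R]_d * R =>
    network sigma (fun j => W j + p.2%:M) b p.1).
Proof.
apply: continuous_network => // [j p | p]; last exact: cvg_fst.
apply: cvgD; first exact: cvg_cst.
apply: (continuous_comp (f := snd)); first exact: cvg_snd.
exact: continuous_scalar_mx.
Qed.

Lemma enorm0 (R : realType) d : enorm (0 : 'cV[R]_d) = 0.
Proof. by rewrite /enorm big1 ?sqrtr0 // => i _; rewrite mxE expr0n. Qed.

Lemma continuous_enorm (R : realType) d : continuous (@enorm R d).
Proof.
have sq_entry i : continuous (fun w : 'cV[R]_d => w i 0 ^+ 2).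
  have entry : continuous (fun w : 'cV[R]_d => w i 0).
    exact: @coord_continuous R d 1 i 0.
  by move=> w; exact: cvgM (entry w) (entry w).
move=> v; apply: continuous_comp; last exact: sqrt_continuous.
by apply: continuous_big v => [|i _]; [exact: add_continuous | exact: sq_entry].
Qed.

Section invertible_perturbation.
Context {R : realType}.

Lemma horner_neq0_near (p : {poly R}) (a : R) :
  p != 0 -> \forall t \near a^', p.[t] != 0.
Proof.
move=> p0; have [m [q /implyP/(_ p0) qa0 ->]] := multiplicity_XsubC p a.
have qa : \forall t \near a, q.[t] != 0.
  have qt_qa : horner q t @[t --> a] --> q.[a] := @continuous_horner R q a.
  by apply: cvgr_neq0 qt_qa _; rewrite -rootE.
near=> t.
rewrite hornerM horner_exp hornerXsubC mulf_neq0 ?expf_neq0 ?subr_eq0 //.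
  by near: t; exact: nbhs_dnbhs qa.
by near: t; exact: nbhs_dnbhs_neq.
Unshelve. all: by end_near. Qed.

Lemma det_add_scalar n (A : 'M[R]_n) (t : R) :
  \det (A + t%:M) = (char_poly (- A)).[t].
Proof.
rewrite /char_poly -horner_evalE -det_map_mx; congr (\det _).
apply/matrixP => i j; rewrite !mxE /= horner_evalE.
by rewrite hornerD hornerN hornerC hornerMn hornerX opprK addrC.
Qed.

Lemma unitmx_add_scalar_near0 n (A : 'M[R]_n) :
  \forall t \near (0 : R)^', A + t%:M \in unitmx.
Proof.
have charA_neq0 : char_poly (- A) != 0 by exact/monic_neq0/char_poly_monic.
apply: filterS (horner_neq0_near _ 0 charA_neq0) => t.
by rewrite unitmxE unitfE det_add_scalar.
Qed.

End invertible_perturbation.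

Theorem lemma7 (R : realType) (d L : nat) (sigma : R -> R)
  (hsigma : continuous (sigma : R -> R))
  (W : 'I_L -> 'M[R]_d) (b : 'I_L -> 'cV[R]_d)
  (K : set 'cV[R]_d) (hK : compact K) (eps : R) (heps : 0 < eps) :
  exists Wt : 'I_L -> 'M[R]_d,
    (forall j, Wt j \in unitmx) /\
    exists2 M : R, M < eps &
      forall x, K x -> enorm (network sigma Wt b x - network sigma W b x) <= M.
Proof.
pose err p :=
  enorm (network sigma (fun j => W j + p.2%:M) b p.1 - network sigma W b p.1).
have err0 x : err (x, 0) = 0.
  rewrite /err /=.
  have -> : (fun j => W j + 0%:M) = W by apply/funext => j; rewrite raddf0 addr0.
  by rewrite subrr enorm0.
have err_cont : continuous err.
  move=> p; apply: continuous_comp; last exact: continuous_enorm.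
  apply: cvgB; first exact: continuous_network_shift.
  by apply: continuous_network => // [j q | q]; [exact: cvg_cst | exact: cvg_fst].
have err_small x : K x -> \forall x' \near x & t \near 0, err (x', t) < eps / 2.
  move=> _; have err_x0 : err p @[p --> (x, 0)] --> 0.
    by rewrite -[X in _ --> X](err0 x); exact: err_cont.
  by apply: cvgr_lt err_x0 _ _; exact: divr_gt0.
have err_unif : \forall t \near 0, forall x, K x -> err (x, t) < eps / 2.
  exact: (proj1 (compact_near_coveringP K) hK _ _ _ _ err_small).
have [t [t_unif t_unit]] : exists t, (forall x, K x -> err (x, t) < eps / 2) /\
    forall j, W j + t%:M \in unitmx.
  apply: (@filter_ex _ (0 : R)^'); near=> t; split.
    by near: t; exact: nbhs_dnbhs err_unif.
  by near: t; apply: filter_forall => j; exact: unitmx_add_scalar_near0.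
exists (fun j => W j + t%:M); split => //.
exists (eps / 2); first by rewrite ltr_pdivrMr // ltr_pMr // ltr1n.
by move=> x /t_unif /ltW.
Unshelve. all: by end_near. Qed.
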